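(* There exists a function $\mathrm{B}:2^{<\omega}\times 2^{<\omega}\to\mathbb{N}$ such that: (1) $\mathrm{B}(x|y)$ is upper semi-computable uniformly in $x,y$; (2) there is a constant $c$ such that $\mathrm{B}(x|y)\le |x|+c$ for all $x,y$; (3) there is a constant $d$, independent of $y$, such that $|\{x : \mathrm{B}(x|y)\le n\}|\le d\cdot 2^n$ for all $y$ and $n$; (4) for every partial computable function $f:2^{<\omega}\to 2^{<\omega}$ there is a constant $c_f$ such that $\mathrm{B}(f(x)|y)\le \mathrm{B}(x|y)+c_f$ for all $y$ and all $x$ in the domain of $f$; (5) there is a constant $e$ such that $\mathrm{B}(x|x)\le e$ for all $x$; (6) $|\mathrm{B}(x|y)-\mathrm{C}(x|y)|$ is unbounded over $x,y\in 2^{<\omega}$.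
   Context: $2^{<\omega}$ is the set of finite binary strings; $|x|$ is the length of $x$; $\langle\cdot,\cdot\rangle$ is a fixed computable pairing function on strings. For a machine $T$, $\mathrm{C}_T(x|y)=\min\{|z| : T(\langle z,y\rangle)=x\}$. Fix an optimal machine $\mathbb{U}$ (for every machine $T$ there is $c_T$ with $\mathrm{C}_{\mathbb{U}}(x|y)\le \mathrm{C}_T(x|y)+c_T$ for all $x,y$) and set $\mathrm{C}(x|y)=\mathrm{C}_{\mathbb{U}}(x|y)$. Upper semi-computable uniformly in $x,y$ means the predicate ''$\mathrm{B}(x|y)\le k$'' is computably enumerable uniformly in $x,y,k$. *)

From mathcomp Require Import all_boot.
From Stdlib Require List.

Set Implicit Arguments.
Unset Strict Implicit.
Unset Printing Implicit Defensive.

Inductive code : Type :=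
  | CZero : code
  | CSucc : code
  | CProj : nat -> code
  | CComp : code -> list code -> code
  | CPrec : code -> code -> code
  | CMu   : code -> code.

Inductive eval : code -> seq nat -> nat -> Prop :=
  | evZero v : eval CZero v 0
  | evSucc v : eval CSucc v (head 0 v).+1
  | evProj i v : eval (CProj i) v (nth 0 v i)
  | evComp f gs v ys y :
      List.Forall2 (fun g y0 => eval g v y0) gs ys ->
      eval f ys y -> eval (CComp f gs) v y
  | evPrec0 f g v y : eval f v y -> eval (CPrec f g) (0 :: v) y
  | evPrecS f g n v r y :
      eval (CPrec f g) (n :: v) r -> eval g (n :: r :: v) y ->
      eval (CPrec f g) (n.+1 :: v) y
  | evMu f v n :
      eval f (n :: v) 0 ->
      (forall m, m < n -> exists k, eval f (m :: v) k.+1) ->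
      eval (CMu f) v n.

Definition bstr := seq bool.

(* encode s = (the number whose binary expansion is 1 followed by s) - 1;
   a bijection seq bool -> nat. *)
Definition encode (s : bstr) : nat :=
  (foldl (fun acc (b : bool) => (acc.*2 + b)%N) 1 s).-1.

(* f : 2^{<omega} -> 2^{<omega} is partial computable; [f s = None] means undefined. *)
Definition pcomputable (f : bstr -> option bstr) : Prop :=
  exists c : code, forall (s : bstr) (n : nat),
    eval c [:: encode s] n <-> exists t, f s = Some t /\ n = encode t.

Definition spair (z y : bstr) : bstr :=
  flatten [seq [:: b; b] | b <- z] ++ [:: false; true] ++ y.

Definition machine (T : bstr -> option bstr) : Prop := pcomputable T.

(* U is optimal: for every machine T there is c_T with C_U(x|y) <= C_T(x|y) + c_T,
   i.e. every T-description z of x given y yields a U-description no more than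
   c_T bits longer. *)
Definition optimal (U : bstr -> option bstr) : Prop :=
  forall T, machine T -> exists cT : nat, forall x y z : bstr,
    T (spair z y) = Some x ->
    exists z', U (spair z' y) = Some x /\ size z' <= size z + cT.

(* [isC U x y m] : m = C_U(x|y) = min{|z| : U(<z,y>) = x}. *)
Definition isC (U : bstr -> option bstr) (x y : bstr) (m : nat) : Prop :=
  (exists z, U (spair z y) = Some x /\ size z = m) /\
  (forall z, U (spair z y) = Some x -> m <= size z).

(* "B(x|y) <= k" is c.e. uniformly in x, y, k: it is the halting set of a program. *)
Definition upper_semicomputable (B : bstr -> bstr -> nat) : Prop :=
  exists c : code, forall (x y : bstr) (k : nat),
    B x y <= k <-> exists n, eval c [:: encode x; encode y; k] n.

Definition natdist (a b : nat) : nat := (a - b) + (b - a).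

From mathcomp Require Import all_boot zify.
From Stdlib Require List ClassicalEpsilon Classical.

Set Implicit Arguments.
Unset Strict Implicit.
Unset Printing Implicit Defensive.

(* B(x|y) is the least k such that x has a U-description of length at most
   (k+1)/2 given y, or one of length at most k given the empty string; thus
   B(x|y) is about min(2 C(x|y), C(x)).  Optimality of U transfers bounds on
   the complexity of x, f(x) and of x given x to B, and counting descriptions
   bounds the number of x with B(x|y) <= n.  The discrepancy with C comes from
   the pairs x = <u, y> with |u| = L and |y| = L + c, where c is the constant
   of the identity machine: C(x|y) <= L + c, whereas B(x|y) <= C(x|y) + K would
   give x either a description of length K + 1 given y or an unconditional one
   of length L + c + K; for L large these are fewer than the 2^(2L+c) pairs.
   Upper semi-computability needs a mu-recursive step-bounded interpreter of
   codes and the pairing function written as a primitive recursive function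
   of the numeric codes of strings. *)

Definition code_ind_nested (P : code -> Prop)
  (HZ : P CZero) (HS : P CSucc) (HP : forall i, P (CProj i))
  (HC : forall f gs, P f -> List.Forall P gs -> P (CComp f gs))
  (HR : forall f g, P f -> P g -> P (CPrec f g))
  (HM : forall f, P f -> P (CMu f)) : forall c, P c :=
  fix F c := match c with
  | CZero => HZ | CSucc => HS | CProj i => HP i
  | CComp f gs => HC f gs (F f) ((fix G gs := match gs return List.Forall P gs with
        | nil => List.Forall_nil _
        | cons g gs' => List.Forall_cons g (F g) (G gs') end) gs)
  | CPrec f g => HR f g (F f) (F g)
  | CMu f => HM f (F f) end.

Definition eval_ind_nested (P : code -> seq nat -> nat -> Prop)
  (HZ : forall v, P CZero v 0)
  (HS : forall v, P CSucc v (head 0 v).+1)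
  (HP : forall i v, P (CProj i) v (nth 0 v i))
  (HC : forall f gs v ys y,
        List.Forall2 (fun g y0 => eval g v y0 /\ P g v y0) gs ys ->
        eval f ys y -> P f ys y -> P (CComp f gs) v y)
  (HR0 : forall f g v y, eval f v y -> P f v y -> P (CPrec f g) (0 :: v) y)
  (HRS : forall f g n v r y,
        eval (CPrec f g) (n :: v) r -> P (CPrec f g) (n :: v) r ->
        eval g (n :: r :: v) y -> P g (n :: r :: v) y -> P (CPrec f g) (n.+1 :: v) y)
  (HM : forall f v n, eval f (n :: v) 0 -> P f (n :: v) 0 ->
        (forall m, m < n -> exists k, eval f (m :: v) k.+1 /\ P f (m :: v) k.+1) ->
        P (CMu f) v n) : forall c v y, eval c v y -> P c v y :=
  fix F c v y (e : eval c v y) {struct e} : P c v y :=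
  match e in eval c v y return P c v y with
  | evZero v => HZ v
  | evSucc v => HS v
  | evProj i v => HP i v
  | evComp f gs v ys y H e1 => HC f gs v ys y
      ((fix G gs ys (H : List.Forall2 (fun g y0 => eval g v y0) gs ys) :=
         match H in List.Forall2 _ gs ys
           return List.Forall2 (fun g y0 => eval g v y0 /\ P g v y0) gs ys with
         | List.Forall2_nil => List.Forall2_nil _
         | List.Forall2_cons g y0 gs' ys' h t =>
             List.Forall2_cons g y0 (conj h (F g v y0 h)) (G gs' ys' t)
         end) gs ys H) e1 (F f ys y e1)
  | evPrec0 f g v y e1 => HR0 f g v y e1 (F f v y e1)
  | evPrecS f g n v r y e1 e2 => HRS f g n v r y e1 (F _ _ _ e1) e2 (F _ _ _ e2)
  | evMu f v n e1 H => HM f v n e1 (F _ _ _ e1)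
      (fun m Hm => match H m Hm with
                   | ex_intro k Hk => ex_intro _ k (conj Hk (F _ _ _ Hk)) end)
  end.

Lemma eval_fun c v y1 y2 : eval c v y1 -> eval c v y2 -> y1 = y2.
Proof.
move=> H; elim/eval_ind_nested: c v y1 / H y2.
- by move=> v y' H; inversion H.
- by move=> v y' H; inversion H.
- by move=> i v y' H; inversion H.
- move=> f gs v ys y Hgs _ IHf y' H; inversion H; subst.
  suff eys : ys = ys0 by subst; apply: IHf.
  elim: Hgs ys0 H2 {H H5 IHf} => [|g y0 gs' ys' [_ IHg] _ IHgs] ys0 Hys0;
    inversion Hys0 => //; subst.
  by rewrite (IHg _ H1) (IHgs _ H3).
- by move=> f g v y _ IH y' H; inversion H; subst; apply: IH.
- move=> f g n v r y _ IH1 _ IH2 y' H; inversion H; subst.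
  by have er := IH1 _ H5; subst; apply: IH2.
- move=> f v n _ IH Hlt y' H; inversion H; subst.
  case: (ltngtP n y') => // Hl.
  + by have [k Hk] := H2 _ Hl; have := IH _ Hk.
  + by have [k [Hk IHk]] := Hlt _ Hl; have := IHk _ H1.
Qed.

(** * A step-bounded interpreter *)

Fixpoint omap_seq (h : code -> option nat) (gs : seq code) : option (seq nat) :=
  match gs with
  | [::] => Some [::]
  | g :: gs' =>
      match h g, omap_seq h gs' with
      | Some y, Some ys => Some (y :: ys)
      | _, _ => None
      end
  end.

Fixpoint orec (F : option nat) (G : nat -> nat -> option nat) (n : nat) : option nat :=
  match n with
  | 0 => F
  | m.+1 => if orec F G m is Some r then G m r else None
  end.

Fixpoint osearch (h : nat -> option nat) (i m : nat) : option nat :=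
  match i with
  | 0 => None
  | i'.+1 =>
      match h m with
      | Some 0 => Some m
      | Some _ => osearch h i' m.+1
      | None => None
      end
  end.

(* The fuel [t] only bounds the length of each minimisation search. *)
Fixpoint run (t : nat) (c : code) (v : seq nat) {struct c} : option nat :=
  match c with
  | CZero => Some 0
  | CSucc => Some (head 0 v).+1
  | CProj i => Some (nth 0 v i)
  | CComp f gs => if omap_seq (fun g => run t g v) gs is Some ys then run t f ys else None
  | CPrec f g =>
      if v is n :: v' then orec (run t f v') (fun m r => run t g (m :: r :: v')) n
      else None
  | CMu f => osearch (fun m => run t f (m :: v)) t 0
  end.

Lemma osearch_sound h i m n : osearch h i m = Some n ->
  [/\ m <= n, h n = Some 0 & forall j, m <= j < n -> exists k, h j = Some k.+1].
Proof.
elim: i m => [|i IH] m //=.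
case E: (h m) => [[|k]|] //; first by case=> <-; split=> // j; lia.
move/IH=> [le_m1n hn0 hlt]; split=> //; first exact: ltnW.
move=> j /andP[le_mj lt_jn]; case: (ltngtP m j) => Hj.
- by apply: hlt; rewrite Hj lt_jn.
- by move: le_mj; rewrite leqNgt Hj.
- by subst; exists k.
Qed.

Lemma osearch_mono h h' i i' m n : osearch h i m = Some n -> i <= i' ->
  (forall j a, h j = Some a -> h' j = Some a) -> osearch h' i' m = Some n.
Proof.
elim: i i' m => [|i IH] [|i'] m //= H Hi Hh.
case E: (h m) H => [[|k]|] //; rewrite (Hh _ _ E) //.
by move=> H; apply: IH.
Qed.

Lemma osearch_complete h i m n : m <= n < m + i -> h n = Some 0 ->
  (forall j, m <= j < n -> exists k, h j = Some k.+1) -> osearch h i m = Some n.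
Proof.
elim: i m => [|i IH] m /=; first by lia.
move=> /andP[le_mn lt_n] hn0 hlt; case: (ltngtP m n) => Hmn.
- have [k ->] : exists k, h m = Some k.+1 by apply: hlt; rewrite leqnn Hmn.
  apply: IH => //; first by lia.
  by move=> j /andP[j1 j2]; apply: hlt; rewrite (ltnW j1) j2.
- by move: le_mn; rewrite leqNgt Hmn.
- by subst; rewrite hn0.
Qed.

Lemma orec_ind (P : nat -> nat -> Prop) F G n y : orec F G n = Some y ->
  (forall y, F = Some y -> P 0 y) ->
  (forall m r y, P m r -> G m r = Some y -> P m.+1 y) -> P n y.
Proof.
move=> H HF HG; elim: n y H => [|n IH] y /=; first exact: HF.
by case E: (orec F G n) => [r|] // H; exact: HG (IH _ E) H.
Qed.

Lemma run_sound c t v y : run t c v = Some y -> eval c v y.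
Proof.
elim/code_ind_nested: c t v y.
- by move=> t v y [<-]; constructor.
- by move=> t v y [<-]; constructor.
- by move=> i t v y [<-]; constructor.
- move=> f gs IHf IHgs t v y /=.
  case E: (omap_seq _ gs) => [ys|] // H; apply: (@evComp _ _ _ ys); last exact: IHf H.
  elim: IHgs ys E {H} => [|g gs' Hg _ IH] ys /=; first by case=> <-.
  case E1: (run t g v) => [y0|] //; case E2: (omap_seq _ gs') => [ys'|] // [<-].
  by constructor; [exact: Hg E1 | exact: IH].
- move=> f g IHf IHg t [|n v] y //= H.
  apply: (orec_ind (P := fun n y => eval (CPrec f g) (n :: v) y) H).
  + by move=> y0 /IHf e; constructor.
  + by move=> m r y0 e /IHg e2; apply: evPrecS e e2.
- move=> f IHf t v y /= /osearch_sound [_ H0 Hj].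
  constructor; first exact: IHf H0.
  by move=> m Hm; have [k Hk] := Hj m Hm; exists k; exact: IHf Hk.
Qed.

Lemma run_mono c t t' v y : run t c v = Some y -> t <= t' -> run t' c v = Some y.
Proof.
elim/code_ind_nested: c t t' v y => //.
- move=> f gs IHf IHgs t t' v y /= H Ht.
  have Hgs ys : omap_seq (fun g => run t g v) gs = Some ys ->
                omap_seq (fun g => run t' g v) gs = Some ys.
    elim: IHgs ys => [|g gs' Hg _ IH] ys //=.
    case E1: (run t g v) => [y0|] //; case E2: (omap_seq _ gs') => [ys'|] // [<-].
    by rewrite (Hg _ _ _ _ E1 Ht) (IH _ E2).
  move: H; case E: (omap_seq _ gs) => [ys|] // H.
  by rewrite (Hgs _ E); exact: IHf H Ht.
- move=> f g IHf IHg t t' [|n v] y //= H Ht.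
  elim: n y H => [|n IH] y /=; first by move=> H; exact: IHf H Ht.
  case E: (orec _ _ n) => [r|] // H.
  by rewrite (IH _ E); exact: IHg H Ht.
- move=> f IHf t t' v y /= H Ht.
  by apply: (osearch_mono H Ht) => j a H0; exact: IHf H0 Ht.
Qed.

Lemma uniform_bound (Q : nat -> nat -> Prop) n :
  (forall m t t', Q m t -> t <= t' -> Q m t') ->
  (forall m, m < n -> exists t, Q m t) -> exists T, forall m, m < n -> Q m T.
Proof.
move=> Qmono; elim: n => [|n IH] H; first by exists 0.
have [T1 HT1] := IH (fun m Hm => H m (ltnW Hm)).
have [T2 HT2] := H n (ltnSn n).
exists (maxn T1 T2) => m; rewrite ltnS leq_eqVlt; case/orP=> [/eqP->|Hm].
- by apply: Qmono HT2 _; rewrite leq_maxr.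
- by apply: Qmono (HT1 _ Hm) _; rewrite leq_maxl.
Qed.

Lemma run_complete c v y : eval c v y -> exists t, run t c v = Some y.
Proof.
elim/eval_ind_nested: c v y / .
- by move=> v; exists 0.
- by move=> v; exists 0.
- by move=> i v; exists 0.
- move=> f gs v ys y H _ [tf Hf].
  have [T HT] : exists T, forall t, T <= t -> omap_seq (fun g => run t g v) gs = Some ys.
    elim: H => [|g y0 gs' ys' [_ [t0 H0]] _ [T HT]]; first by exists 0.
    exists (maxn t0 T) => t Ht /=.
    rewrite (run_mono H0 (leq_trans (leq_maxl _ _) Ht)).
    by rewrite (HT _ (leq_trans (leq_maxr _ _) Ht)).
  exists (maxn tf T) => /=; rewrite (HT _ (leq_maxr _ _)).
  exact: run_mono Hf (leq_maxl _ _).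
- by move=> f g v y _ [t Ht]; exists t.
- move=> f g n v r y _ [t1 H1] _ [t2 H2]; exists (maxn t1 t2) => /=.
  have /= -> := run_mono H1 (leq_maxl t1 t2).
  exact: run_mono H2 (leq_maxr _ _).
- move=> f v n _ [t0 H0] Hlt.
  have [T HT] := uniform_bound (Q := fun m t => exists k, run t f (m :: v) = Some k.+1)
    (fun m t t' '(ex_intro k Hk) Htt => ex_intro _ k (run_mono Hk Htt))
    (fun m Hm => let: ex_intro k (conj _ (ex_intro t Ht)) := Hlt m Hm in
                 ex_intro _ t (ex_intro _ k Ht)).
  exists (maxn (maxn T t0) n.+1) => /=; apply: osearch_complete.
  + by rewrite add0n leq0n /= (leq_trans _ (leq_maxr _ _)).
  + by apply: run_mono H0 _; exact: leq_trans (leq_maxr _ _) (leq_maxl _ _).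
  + move=> j /andP[_ Hj]; have [k Hk] := HT _ Hj; exists k.
    by apply: run_mono Hk _; exact: leq_trans (leq_maxl _ _) (leq_maxl _ _).
Qed.

Lemma eval_proj i v y : y = nth 0 v i -> eval (CProj i) v y.
Proof. by move=> ->; constructor. Qed.

Lemma eval_comp1 f g1 v a y : eval g1 v a -> eval f [:: a] y -> eval (CComp f [:: g1]) v y.
Proof. by move=> h1 h; apply: (@evComp _ _ _ [:: a]) => //; constructor. Qed.

Lemma eval_comp2 f g1 g2 v a b y : eval g1 v a -> eval g2 v b -> eval f [:: a; b] y ->
  eval (CComp f [:: g1; g2]) v y.
Proof. by move=> h1 h2 h; apply: (@evComp _ _ _ [:: a; b]) => //; repeat constructor. Qed.

Lemma eval_comp3 f g1 g2 g3 v a b c y :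
  eval g1 v a -> eval g2 v b -> eval g3 v c -> eval f [:: a; b; c] y ->
  eval (CComp f [:: g1; g2; g3]) v y.
Proof. by move=> h1 h2 h3 h; apply: (@evComp _ _ _ [:: a; b; c]) => //; repeat constructor. Qed.

Lemma eval_prec f g v (h : nat -> nat) n : eval f v (h 0) ->
  (forall i, i < n -> eval g (i :: h i :: v) (h i.+1)) -> eval (CPrec f g) (n :: v) (h n).
Proof.
move=> H0 HS; elim: n HS => [|n IH] HS; first by constructor.
by apply: evPrecS (HS _ (ltnSn n)); apply: IH => i Hi; apply: HS; exact: ltnW.
Qed.

Fixpoint cconst n := if n is m.+1 then CComp CSucc [:: cconst m] else CZero.

Lemma eval_cconst n v : eval (cconst n) v n.
Proof. by elim: n => [|n IH] /=; [constructor | apply: eval_comp1 IH _; constructor]. Qed.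

Definition Suc g := CComp CSucc [:: g].
Definition Pred g := CComp (CPrec CZero (CProj 0)) [:: g].
Definition Add g1 g2 := CComp (CPrec (CProj 0) (Suc (CProj 1))) [:: g1; g2].
Definition Mul g1 g2 := CComp (CPrec CZero (Add (CProj 1) (CProj 2))) [:: g1; g2].
Definition Sub g1 g2 := CComp (CPrec (CProj 0) (Pred (CProj 1))) [:: g2; g1].
Definition Ifz g1 g2 g3 := CComp (CPrec (CProj 0) (CProj 3)) [:: g1; g2; g3].
Definition Sg g := Ifz g (cconst 0) (cconst 1).
Definition Dist g1 g2 := Add (Sub g1 g2) (Sub g2 g1).
Definition Eqb g1 g2 := Ifz (Dist g1 g2) (cconst 1) (cconst 0).
Definition Ltb g1 g2 := Ifz (Sub (Suc g1) g2) (cconst 1) (cconst 0).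

Lemma eval_Suc v g a : eval g v a -> eval (Suc g) v a.+1.
Proof. by move=> h; apply: eval_comp1 h _; constructor. Qed.

Lemma eval_Pred v g a : eval g v a -> eval (Pred g) v a.-1.
Proof.
move=> h; apply: eval_comp1 h _; apply: (eval_prec (h := predn)); first by constructor.
by move=> i _; exact: eval_proj.
Qed.

Lemma eval_Add v g1 g2 a b : eval g1 v a -> eval g2 v b -> eval (Add g1 g2) v (a + b).
Proof.
move=> h1 h2; apply: eval_comp2 h1 h2 _; apply: (eval_prec (h := addn^~ b)).
  exact: eval_proj.
by move=> i _; apply: eval_Suc; exact: eval_proj.
Qed.

Lemma eval_Mul v g1 g2 a b : eval g1 v a -> eval g2 v b -> eval (Mul g1 g2) v (a * b).
Proof.
move=> h1 h2; apply: eval_comp2 h1 h2 _; apply: (eval_prec (h := muln^~ b)).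
  by constructor.
by move=> i _; rewrite mulSn addnC; apply: eval_Add; exact: eval_proj.
Qed.

Lemma eval_Sub v g1 g2 a b : eval g1 v a -> eval g2 v b -> eval (Sub g1 g2) v (a - b).
Proof.
move=> h1 h2; apply: eval_comp2 h2 h1 _; apply: (eval_prec (h := subn a)).
  by rewrite subn0; exact: eval_proj.
by move=> i _; rewrite subnS; apply: eval_Pred; exact: eval_proj.
Qed.

Lemma eval_Ifz v g1 g2 g3 a b c : eval g1 v a -> eval g2 v b -> eval g3 v c ->
  eval (Ifz g1 g2 g3) v (if a == 0 then b else c).
Proof.
move=> h1 h2 h3; apply: eval_comp3 h1 h2 h3 _.
apply: (eval_prec (h := fun i => if i == 0 then b else c)); first exact: eval_proj.
by move=> i _; exact: eval_proj.
Qed.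

Lemma eval_Sg v g a : eval g v a -> eval (Sg g) v (a != 0).
Proof.
by move=> h; have := eval_Ifz h (eval_cconst 0 v) (eval_cconst 1 v); case: (a == 0).
Qed.

Lemma eval_Dist v g1 g2 a b : eval g1 v a -> eval g2 v b ->
  eval (Dist g1 g2) v (a - b + (b - a)).
Proof. by move=> h1 h2; apply: eval_Add; apply: eval_Sub. Qed.

Lemma dist_eq0 a b : (a - b + (b - a) == 0) = (a == b).
Proof. by rewrite addn_eq0 !subn_eq0 eqn_leq. Qed.

Lemma eval_Eqb v g1 g2 a b : eval g1 v a -> eval g2 v b -> eval (Eqb g1 g2) v (a == b).
Proof.
move=> h1 h2; have := eval_Ifz (eval_Dist h1 h2) (eval_cconst 1 v) (eval_cconst 0 v).
by rewrite dist_eq0; case: (a == b).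
Qed.

Lemma eval_Ltb v g1 g2 a b : eval g1 v a -> eval g2 v b -> eval (Ltb g1 g2) v (a < b).
Proof.
move=> h1 h2; have := eval_Ifz (eval_Sub (eval_Suc h1) h2) (eval_cconst 1 v) (eval_cconst 0 v).
by rewrite subn_eq0; case: (a < b).
Qed.

(** * The interpreter is mu-recursive *)

Definition oenc (o : option nat) := if o is Some y then y.+1 else 0.

Definition projs k L := [seq CProj (i + k) | i <- iota 0 L].

Lemma projsS k L : projs k L.+1 = CProj k :: projs k.+1 L.
Proof.
rewrite /projs /= -[1]addn0 iotaDl -map_comp; congr (_ :: _).
by apply: eq_map => i /=; rewrite addnS.
Qed.

Lemma eval_projs pre v :
  List.Forall2 (fun g y => eval g (pre ++ v) y) (projs (size pre) (size v)) v.
Proof.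
elim: v pre => [|x v IH] pre /=; first by constructor.
rewrite projsS; constructor; first by apply: eval_proj; rewrite nth_cat ltnn subnn.
by have := IH (rcons pre x); rewrite size_rcons cat_rcons.
Qed.

(* Search state of a minimisation after [j] steps: [0] while searching, [1]
   once an undefined value was met, [i.+2] once a zero was found at [i]. *)
Fixpoint mu_state (h : nat -> option nat) (j : nat) : nat :=
  if j is j'.+1 then
    let s := mu_state h j' in
    if s == 0 then (if h j' is Some k then (if k is 0 then j'.+2 else 0) else 1) else s
  else 0.

Definition mu_result (s : nat) := if s.-1 == 0 then 0 else s.-1.

Lemma mu_state_stay h j i : mu_state h j != 0 -> mu_state h (i + j) = mu_state h j.
Proof. by move=> H; elim: i => //= i ->; rewrite (negbTE H). Qed.

Lemma mu_state_osearch h i j :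
  mu_state h j = 0 -> mu_result (mu_state h (i + j)) = oenc (osearch h i j).
Proof.
elim: i j => [|i IH] j H0; first by rewrite add0n H0.
rewrite addSnnS /=; case E: (h j) => [[|k]|].
- have H1 : mu_state h j.+1 = j.+2 by rewrite /= H0 eqxx E.
  by rewrite mu_state_stay ?H1.
- by apply: IH; rewrite /= H0 eqxx E.
- have H1 : mu_state h j.+1 = 1 by rewrite /= H0 eqxx E.
  by rewrite mu_state_stay ?H1.
Qed.

Definition csim_comp (sf : code) (sgs : seq code) : code :=
  Mul (foldr (fun sg acc => Mul (Sg sg) acc) (cconst 1) sgs)
      (CComp sf (CProj 0 :: map Pred sgs)).

Definition csim_prec (sf sg : code) (L : nat) : code :=
  CComp (CPrec sf (Mul (Sg (CProj 1))
                       (CComp sg (CProj 2 :: CProj 0 :: Pred (CProj 1) :: projs 3 L))))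
        (CProj 1 :: CProj 0 :: projs 2 L).

Definition csim_mu_state (sf : code) (L : nat) : code :=
  let Sf := CComp sf (CProj 2 :: CProj 0 :: projs 3 L) in
  CComp (CPrec (cconst 0)
          (Ifz (CProj 1)
               (Ifz Sf (cconst 1) (Ifz (Pred Sf) (Suc (Suc (CProj 0))) (cconst 0)))
               (CProj 1)))
        (CProj 0 :: CProj 0 :: projs 1 L).

Definition csim_mu (sf : code) (L : nat) : code :=
  Ifz (Pred (csim_mu_state sf L)) (cconst 0) (Pred (csim_mu_state sf L)).

Fixpoint csim (c : code) (L : nat) {struct c} : code :=
  match c with
  | CZero => cconst 1
  | CSucc => Suc (Suc (CProj 1))
  | CProj i => Suc (CProj i.+1)
  | CComp f gs => csim_comp (csim f (size gs)) (map (fun g => csim g L) gs)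
  | CPrec f g => if L is L'.+1 then csim_prec (csim f L') (csim g L'.+2) L' else cconst 0
  | CMu f => csim_mu (csim f L.+1) L
  end.

Definition simulates (c : code) :=
  forall L t v, size v = L -> eval (csim c L) (t :: v) (oenc (run t c v)).

Lemma simulates_comp f gs : simulates f -> List.Forall simulates gs ->
  simulates (CComp f gs).
Proof.
move=> IHf IHgs L t v Hv /=.
set os := [seq oenc (run t g v) | g <- gs].
have Hdef : eval (foldr (fun sg acc => Mul (Sg sg) acc) (cconst 1) [seq csim g L | g <- gs])
              (t :: v) (all (fun o => o != 0) os).
  rewrite /os; elim: IHgs {os} => [|g gs' Hg _ IH] /=; first exact: (eval_cconst 1).
  by rewrite -mulnb; apply: eval_Mul IH; apply: eval_Sg; exact: Hg.
have Hf : eval (CComp (csim f (size gs)) (CProj 0 :: map Pred [seq csim g L | g <- gs]))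
            (t :: v) (oenc (run t f (map predn os))).
  apply: (@evComp _ _ _ (t :: map predn os)); last by apply: IHf; rewrite !size_map.
  constructor; first exact: eval_proj.
  rewrite /os; elim: IHgs {os Hdef} => [|g gs' Hg _ IH] /=; first constructor.
  by constructor=> //; apply: eval_Pred; exact: Hg.
have := eval_Mul Hdef Hf; rewrite /=.
suff [[-> ->] | [-> ->]] :
    all (fun o => o != 0) os /\ omap_seq (fun g => run t g v) gs = Some (map predn os) \/
    all (fun o => o != 0) os = false /\ omap_seq (fun g => run t g v) gs = None.
- by rewrite mul1n.
- by rewrite mul0n.
rewrite /os; elim: gs {IHgs Hdef Hf os} => [|g gs' IH] /=; first by left.
by case: (run t g v) => [y|] /=; [case: IH => -[-> ->]; [left|right] | right].
Qed.

Lemma simulates_prec f g : simulates f -> simulates g -> simulates (CPrec f g).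
Proof.
move=> IHf IHg [|L] t v Hv; first by case: v Hv => // _; exact: eval_cconst.
case: v Hv => [|n v] // [Hv] /=.
apply: (@evComp _ _ _ (n :: t :: v)).
  do 2 (constructor; first exact: eval_proj).
  by have := eval_projs [:: t; n] v; rewrite Hv.
set o := orec (run t f v) (fun m r => run t g [:: m, r & v]).
apply: (eval_prec (h := fun i => oenc (o i))); first exact: IHf.
move=> i _ /=; set r := oenc (o i).
have Hg : eval (CComp (csim g L.+2) [:: CProj 2, CProj 0, Pred (CProj 1) & projs 3 L])
            [:: i, r, t & v] (oenc (run t g [:: i, r.-1 & v])).
  apply: (@evComp _ _ _ [:: t, i, r.-1 & v]); last by apply: IHg; rewrite /= Hv.
  do 2 (constructor; first exact: eval_proj).
  constructor; first by apply: eval_Pred; exact: eval_proj.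
  by have := eval_projs [:: i; r; t] v; rewrite Hv.
have := eval_Mul (eval_Sg (evProj 1 [:: i, r, t & v])) Hg.
by rewrite /r /o /=; case: (orec _ _ i) => [y|] /=; rewrite ?mul1n ?mul0n.
Qed.

Lemma simulates_mu f : simulates f -> simulates (CMu f).
Proof.
move=> IHf L t v Hv /=; set h := fun m => run t f (m :: v).
have Hst : eval (csim_mu_state (csim f L.+1) L) (t :: v) (mu_state h t).
  apply: (@evComp _ _ _ (t :: t :: v)).
    do 2 (constructor; first exact: eval_proj).
    by have := eval_projs [:: t] v; rewrite Hv.
  apply: (eval_prec (h := mu_state h)); first exact: eval_cconst.
  move=> j _; set w := [:: j, mu_state h j, t & v].
  have Hf : eval (CComp (csim f L.+1) (CProj 2 :: CProj 0 :: projs 3 L)) w (oenc (h j)).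
    apply: (@evComp _ _ _ (t :: j :: v)); last by apply: IHf; rewrite /= Hv.
    do 2 (constructor; first exact: eval_proj).
    by have := eval_projs [:: j; mu_state h j; t] v; rewrite Hv.
  have := eval_Ifz (evProj 1 w)
            (eval_Ifz Hf (eval_cconst 1 _)
               (eval_Ifz (eval_Pred Hf) (eval_Suc (eval_Suc (evProj 0 w))) (eval_cconst 0 _)))
            (evProj 1 w).
  by rewrite /=; case: (mu_state h j == 0) => //=; case: (h j) => [[|k]|].
have := eval_Ifz (eval_Pred Hst) (eval_cconst 0 _) (eval_Pred Hst).
by have := @mu_state_osearch h t 0 erefl; rewrite addn0 /mu_result => <-.
Qed.

Lemma simulatesP c : simulates c.
Proof.
elim/code_ind_nested: c.
- by move=> L t v _; exact: eval_cconst.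
- by move=> L t v _; apply: eval_Suc; apply: eval_Suc; apply: eval_proj; case: v.
- by move=> i L t v _; apply: eval_Suc; exact: eval_proj.
- exact: simulates_comp.
- exact: simulates_prec.
- exact: simulates_mu.
Qed.

Definition bstep (acc : nat) (b : bool) := acc.*2 + b.

(* [bnum s] has binary expansion [1] followed by [s], so [encode s = (bnum s).-1]. *)
Definition bnum (s : bstr) := foldl bstep 1 s.
Definition bval (s : bstr) := foldl bstep 0 s.

Lemma foldl_bstep a s : foldl bstep a s = a * 2 ^ size s + bval s.
Proof.
rewrite /bval; elim/last_ind: s a => [|s b IH] a /=; first by rewrite muln1 addn0.
by rewrite !foldl_rcons IH (IH 0) /bstep size_rcons expnS; lia.
Qed.

Lemma bval_lt s : bval s < 2 ^ size s.
Proof.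
rewrite /bval; elim/last_ind: s => [|s b IH] //=.
by rewrite foldl_rcons size_rcons expnS [X in X < _]/bstep -muln2; case: b => /=; lia.
Qed.

Lemma bnumE s : bnum s = 2 ^ size s + bval s.
Proof. by rewrite /bnum foldl_bstep mul1n. Qed.

Lemma bnum_bounds s : 2 ^ size s <= bnum s < 2 ^ (size s).+1.
Proof. by rewrite bnumE expnS; have := bval_lt s; lia. Qed.

Lemma bnum_gt0 s : 0 < bnum s.
Proof. by have /andP[+ _] := bnum_bounds s; apply: leq_trans; rewrite expn_gt0. Qed.

Lemma encodeS s : (encode s).+1 = bnum s.
Proof. by rewrite /encode prednK // bnum_gt0. Qed.

Lemma bnum_rcons s b : bnum (rcons s b) = b + (bnum s).*2.
Proof. by rewrite /bnum foldl_rcons /bstep addnC. Qed.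

Lemma bnum_cat s t : bnum (s ++ t) = bnum s * 2 ^ size t + bval t.
Proof. by rewrite /bnum foldl_cat foldl_bstep. Qed.

Lemma bnum_inj : injective bnum.
Proof.
elim/last_ind=> [|s b IH]; case/lastP=> [|t c] //; rewrite ?bnum_rcons -?muln2.
- by rewrite (_ : bnum [::] = 1) //; have := bnum_gt0 t; case: c => /=; lia.
- by rewrite (_ : bnum [::] = 1) //; have := bnum_gt0 s; case: b => /=; lia.
move=> H; have Hb : b = c by case: b c H => [] [] //=; lia.
by subst c; congr rcons; apply: IH; lia.
Qed.

Lemma encode_inj : injective encode.
Proof. by move=> s t H; apply: bnum_inj; rewrite -!encodeS H. Qed.

Lemma bnum_surj M : 0 < M -> exists s, bnum s = M.
Proof.
elim/ltn_ind: M => M IH M_gt0; case: (ltnP 1 M) => M_gt1.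
- have [s Hs] : exists s, bnum s = M./2.
    by apply: IH; [rewrite ltn_half_double; lia | rewrite half_gt0].
  by exists (rcons s (odd M)); rewrite bnum_rcons Hs odd_double_half.
- by exists [::]; apply/eqP; rewrite eqn_leq M_gt1 M_gt0.
Qed.

Lemma encode_surj n : exists s, encode s = n.
Proof. by have [s Hs] := bnum_surj (ltn0Sn n); exists s; apply: succn_inj; rewrite encodeS. Qed.

Lemma encode_lt z k : size z <= k -> encode z < 2 ^ k.+1.
Proof.
move=> Hz; have /andP[_] := bnum_bounds z; rewrite -encodeS => /ltnW lt_z.
by apply: leq_trans lt_z _; rewrite leq_exp2l.
Qed.

Definition dup (z : bstr) : bstr := flatten [seq [:: b; b] | b <- z].

Lemma dup_rcons z b : dup (rcons z b) = dup z ++ [:: b; b].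
Proof. by rewrite /dup map_rcons flatten_rcons. Qed.

Lemma spair_inj z1 y1 z2 y2 : spair z1 y1 = spair z2 y2 -> z1 = z2 /\ y1 = y2.
Proof.
elim: z1 z2 => [|b z1 IH] [|c z2] //=.
- by case=> ->.
- by case: c.
- by case: b.
- by case=> -> _ /IH [-> ->].
Qed.

Lemma size_spair z y : size (spair z y) = 2 * size z + 2 + size y.
Proof. by elim: z => [|b z IH] //=; rewrite /spair /= in IH; rewrite IH; lia. Qed.

(** * The pairing function on codes of strings *)

Fixpoint hibit (n : nat) : nat :=
  if n is i.+1 then (if i.+1 == 2 * hibit i then 2 * hibit i else hibit i) else 1.

Fixpoint ilog2 (n : nat) : nat :=
  if n is i.+1 then ilog2 i + (i.+1 == 2 * hibit i) else 0.

Lemma hibitS i : hibit i.+1 = if i.+1 == 2 * hibit i then 2 * hibit i else hibit i.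
Proof. by []. Qed.

Lemma ilog2S i : ilog2 i.+1 = ilog2 i + (i.+1 == 2 * hibit i).
Proof. by []. Qed.

Lemma hibit_ilog2 M k : 2 ^ k <= M < 2 ^ k.+1 -> hibit M = 2 ^ k /\ ilog2 M = k.
Proof.
elim: M k => [|[|i] IH] k; first by rewrite leqn0 expn_eq0.
  by case: k => [//|k]; rewrite expnS; have := expn_gt0 2 k; lia.
move=> /andP[H1 H2]; rewrite hibitS ilog2S; case: (ltnP i.+1 (2 ^ k)) => Hi.
- case: k H1 H2 Hi => [|k] H1 H2 Hi; first by move: Hi; rewrite expn0.
  have Hk : i.+2 = 2 ^ k.+1 by lia.
  have [-> ->] : hibit i.+1 = 2 ^ k /\ ilog2 i.+1 = k.
    by apply: IH; move: H1 H2 Hi Hk; rewrite !expnS; lia.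
  by rewrite -expnS Hk eqxx addn1.
- have [-> ->] := IH k (ltac:(lia)).
  by rewrite -expnS (_ : (i.+2 == 2 ^ k.+1) = false) ?addn0 //; apply/eqP; lia.
Qed.

Lemma hibit_bnum s : hibit (bnum s) = 2 ^ size s.
Proof. by have [] := hibit_ilog2 (bnum_bounds s). Qed.

Lemma ilog2_bnum s : ilog2 (bnum s) = size s.
Proof. by have [] := hibit_ilog2 (bnum_bounds s). Qed.

Lemma ilog2_encodeS z : ilog2 (encode z).+1 = size z.
Proof. by rewrite encodeS ilog2_bnum. Qed.

(* The [i] lowest binary digits of [M], written in base 4. *)
Fixpoint spread (M i : nat) : nat :=
  if i is j.+1 then spread M j + odd (iter j half M) * (2 ^ j * 2 ^ j) else 0.

Lemma spread_bit (b : bool) M i : spread (b + M.*2) i.+1 = b + 4 * spread M i.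
Proof.
elim: i => [|i IH] /=; first by rewrite oddD odd_double addbF muln1; case: b.
by rewrite /= in IH; rewrite IH -iterS iterSr half_bit_double !expnS; lia.
Qed.

Definition dupnum N := 2 ^ ilog2 N * 2 ^ ilog2 N + 3 * spread N (ilog2 N).

Lemma dupnum_bnum z : dupnum (bnum z) = bnum (dup z).
Proof.
rewrite /dupnum ilog2_bnum; elim/last_ind: z => [|z b IH] //.
rewrite bnum_rcons size_rcons spread_bit dup_rcons bnum_cat /= -IH.
by rewrite /bval /= /bstep; case: b => /=; rewrite !expnS; lia.
Qed.

Definition pairnum j e :=
  ((4 * dupnum j.+1 + 1) * hibit e.+1 + (e.+1 - hibit e.+1)).-1.

Lemma pairnum_encode z y : pairnum (encode z) (encode y) = encode (spair z y).
Proof.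
rewrite /pairnum !encodeS dupnum_bnum hibit_bnum /encode -/(bnum _).
rewrite /spair catA bnum_cat (bnumE y) addKn.
by congr predn; congr (_ + _); rewrite bnum_cat -/(dup z) /bval /= /bstep; lia.
Qed.

Definition Half g := CComp (CPrec CZero (Sub (CProj 0) (CProj 1))) [:: g].
Definition Odd g := Sub g (Mul (Half g) (cconst 2)).
Definition IterHalf gi gM := CComp (CPrec (CProj 0) (Half (CProj 1))) [:: gi; gM].
Definition Pow2 g := CComp (CPrec (cconst 1) (Mul (CProj 1) (cconst 2))) [:: g].
Definition Hib g :=
  CComp (CPrec (cconst 1) (Ifz (Dist (Suc (CProj 0)) (Mul (cconst 2) (CProj 1)))
                               (Mul (cconst 2) (CProj 1)) (CProj 1))) [:: g].
Definition Ilog2 g :=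
  CComp (CPrec CZero (Add (CProj 1) (Eqb (Suc (CProj 0)) (Mul (cconst 2) (Hib (CProj 0))))))
        [:: g].
Definition Spread gi gM :=
  CComp (CPrec CZero (Add (CProj 1) (Mul (Odd (IterHalf (CProj 0) (CProj 2)))
                                         (Mul (Pow2 (CProj 0)) (Pow2 (CProj 0))))))
        [:: gi; gM].
Definition Dupnum g :=
  Add (Mul (Pow2 (Ilog2 g)) (Pow2 (Ilog2 g))) (Mul (cconst 3) (Spread (Ilog2 g) g)).
Definition Pairnum gj ge :=
  Pred (Add (Mul (Add (Mul (cconst 4) (Dupnum (Suc gj))) (cconst 1)) (Hib (Suc ge)))
            (Sub (Suc ge) (Hib (Suc ge)))).

Lemma eval_Half v g a : eval g v a -> eval (Half g) v a./2.
Proof.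
move=> h; apply: eval_comp1 h _; apply: (eval_prec (h := half)); first by constructor.
move=> i _; have -> : i.+1./2 = i - i./2.
  by rewrite -uphalfE uphalf_half; have := odd_double_half i; rewrite -muln2; lia.
by apply: eval_Sub; exact: eval_proj.
Qed.

Lemma eval_Odd v g a : eval g v a -> eval (Odd g) v (odd a).
Proof.
move=> h; have := eval_Sub h (eval_Mul (eval_Half h) (eval_cconst 2 v)).
by rewrite (_ : a - a./2 * 2 = odd a) //; have := odd_double_half a; rewrite -muln2; lia.
Qed.

Lemma eval_IterHalf v gi gM i M : eval gi v i -> eval gM v M ->
  eval (IterHalf gi gM) v (iter i half M).
Proof.
move=> hi hM; apply: eval_comp2 hi hM _.
apply: (eval_prec (h := fun i => iter i half M)); first exact: eval_proj.
by move=> j _; apply: eval_Half; exact: eval_proj.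
Qed.

Lemma eval_Pow2 v g a : eval g v a -> eval (Pow2 g) v (2 ^ a).
Proof.
move=> h; apply: eval_comp1 h _; apply: (eval_prec (h := expn 2)); first exact: eval_cconst.
by move=> i _; rewrite expnS mulnC; apply: eval_Mul; [exact: eval_proj | exact: eval_cconst].
Qed.

Lemma eval_Hib v g a : eval g v a -> eval (Hib g) v (hibit a).
Proof.
move=> h; apply: eval_comp1 h _; apply: (eval_prec (h := hibit)); first exact: eval_cconst.
move=> i _; set w := [:: i; hibit i].
have := eval_Ifz (eval_Dist (eval_Suc (evProj 0 w)) (eval_Mul (eval_cconst 2 w) (evProj 1 w)))
           (eval_Mul (eval_cconst 2 w) (evProj 1 w)) (evProj 1 w).
by rewrite /= dist_eq0.
Qed.

Lemma eval_Ilog2 v g a : eval g v a -> eval (Ilog2 g) v (ilog2 a).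
Proof.
move=> h; apply: eval_comp1 h _; apply: (eval_prec (h := ilog2)); first by constructor.
move=> i _; set w := [:: i; ilog2 i].
exact: (eval_Add (evProj 1 w) (eval_Eqb (eval_Suc (evProj 0 w))
                                        (eval_Mul (eval_cconst 2 w) (eval_Hib (evProj 0 w))))).
Qed.

Lemma eval_Spread v gi gM i M : eval gi v i -> eval gM v M ->
  eval (Spread gi gM) v (spread M i).
Proof.
move=> hi hM; apply: eval_comp2 hi hM _.
apply: (eval_prec (h := spread M)); first by constructor.
move=> j _; set w := [:: j; spread M j; M].
exact: (eval_Add (evProj 1 w)
          (eval_Mul (eval_Odd (eval_IterHalf (evProj 0 w) (evProj 2 w)))
                    (eval_Mul (eval_Pow2 (evProj 0 w)) (eval_Pow2 (evProj 0 w))))).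
Qed.

Lemma eval_Dupnum v g a : eval g v a -> eval (Dupnum g) v (dupnum a).
Proof.
move=> h; exact: (eval_Add (eval_Mul (eval_Pow2 (eval_Ilog2 h)) (eval_Pow2 (eval_Ilog2 h)))
                          (eval_Mul (eval_cconst 3 v) (eval_Spread (eval_Ilog2 h) h))).
Qed.

Lemma eval_Pairnum v gj ge j e : eval gj v j -> eval ge v e -> eval (Pairnum gj ge) v (pairnum j e).
Proof.
move=> hj he; have hib := eval_Hib (eval_Suc he).
exact: (eval_Pred (eval_Add (eval_Mul (eval_Add (eval_Mul (eval_cconst 4 v)
          (eval_Dupnum (eval_Suc hj))) (eval_cconst 1 v)) hib) (eval_Sub (eval_Suc he) hib))).
Qed.

Lemma pcomputable_id : pcomputable Some.
Proof.
exists (CProj 0) => s n; split; last by case=> t [[<-] ->]; constructor.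
by move=> H; inversion H; exists s.
Qed.

Lemma pcomputable_comp (f g : bstr -> option bstr) : pcomputable f -> pcomputable g ->
  pcomputable (fun w => if f w is Some u then g u else None).
Proof.
move=> [cf Hf] [cg Hg]; exists (CComp cg [:: cf]) => s n; split.
- move=> H; inversion H as [| | |? ? ? ys ? Hys Hn| | |]; subst.
  inversion Hys as [|? y ? ? Hy Hnil]; inversion Hnil; subst.
  by have [u [-> Hyu]] := (Hf s y).1 Hy; subst y; exact: (Hg u n).1.
- case E: (f s) => [u|]; last by case=> t [].
  move=> Hn; apply: eval_comp1 ((Hg u n).2 Hn).
  by apply/(Hf s); exists u.
Qed.

Lemma pcomputable_total (g : bstr -> bstr) c :
  (forall a, eval c [:: encode a] (encode (g a))) -> pcomputable (Some \o g).
Proof.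
move=> Hc; exists c => s n; split; last by case=> t [[<-] ->].
by move/(eval_fun (Hc s)) <-; exists (g s).
Qed.

Definition inv_fun (g : bstr -> bstr) (w : bstr) : option bstr :=
  match ClassicalEpsilon.excluded_middle_informative (exists a, w = g a) with
  | left H => Some (proj1_sig (ClassicalEpsilon.constructive_indefinite_description _ H))
  | right _ => None
  end.

Lemma inv_funP g : injective g -> forall w t, inv_fun g w = Some t <-> w = g t.
Proof.
move=> g_inj w t; rewrite /inv_fun.
case: ClassicalEpsilon.excluded_middle_informative => [H|H].
- case: (ClassicalEpsilon.constructive_indefinite_description _ H) => a /= Ha.
  by split; [case=> <- | move=> Hw; congr Some; apply: g_inj; rewrite -Ha].
- by split=> // Hw; case: H; exists t.
Qed.

Lemma pcomputable_inv_fun g :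
  injective g -> pcomputable (Some \o g) -> pcomputable (inv_fun g).
Proof.
move=> g_inj [cg Hg]; pose D := Dist (CComp cg [:: CProj 0]) (CProj 1).
have eval_D a s : eval D [:: encode a; encode s]
                       (encode (g a) - encode s + (encode s - encode (g a))).
  apply: eval_Dist; last exact: eval_proj.
  by apply: eval_comp1 (evProj 0 _) _; apply/Hg; exists (g a).
exists (CMu D) => s n; split.
- move=> H; inversion H; subst.
  have [a Ha] := encode_surj n; subst n.
  have /eqP := eval_fun H1 (eval_D a s); rewrite eq_sym dist_eq0 => /eqP /encode_inj Hs.
  by exists a; split=> //; apply/(inv_funP g_inj).
- case=> t [/(inv_funP g_inj) -> ->]; constructor.
    by have := eval_D t (g t); rewrite subnn.
  move=> m Hm; have [a Ha] := encode_surj m; subst m.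
  have ne : encode (g a) != encode (g t).
    by apply: contraTneq Hm => /encode_inj /g_inj ->; rewrite ltnn.
  rewrite -dist_eq0 -lt0n in ne.
  exists (encode (g a) - encode (g t) + (encode (g t) - encode (g a))).-1.
  by rewrite prednK //; exact: eval_D.
Qed.

Lemma pcomputable_spair_l y : pcomputable (Some \o spair^~ y).
Proof.
apply: (pcomputable_total (c := Pairnum (CProj 0) (cconst (encode y)))) => a.
by rewrite -pairnum_encode; apply: eval_Pairnum; [exact: evProj | exact: eval_cconst].
Qed.

Lemma pcomputable_spair_r z : pcomputable (Some \o spair z).
Proof.
apply: (pcomputable_total (c := Pairnum (cconst (encode z)) (CProj 0))) => a.
by rewrite -pairnum_encode; apply: eval_Pairnum; [exact: eval_cconst | exact: evProj].
Qed.

Definition Bbound (U : bstr -> option bstr) (x y : bstr) (k : nat) : Prop :=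
  (exists z, 2 * size z <= k.+1 /\ U (spair z y) = Some x) \/
  (exists z, size z <= k /\ U (spair z [::]) = Some x).

Lemma Bbound_mono U x y k k' : Bbound U x y k -> k <= k' -> Bbound U x y k'.
Proof. by move=> [[z [H1 H2]]|[z [H1 H2]]] Hk; [left|right]; exists z; split=> //; lia. Qed.

Lemma ex_minimal (P : nat -> Prop) :
  (exists k, P k) -> exists k, P k /\ forall k', P k' -> k <= k'.
Proof.
move=> [k Pk]; elim/ltn_ind: k Pk => k IH Pk.
case: (Classical_Prop.classic (exists k', k' < k /\ P k')) => [[k' [lt_k'k Pk']]|Hmin].
- exact: IH Pk'.
- exists k; split=> // k' Pk'; rewrite leqNgt; apply/negP => lt_k'k.
  by apply: Hmin; exists k'.
Qed.

Definition B U x y : nat :=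
  ClassicalEpsilon.epsilon (inhabits 0)
    (fun k => Bbound U x y k /\ forall k', Bbound U x y k' -> k <= k').

Lemma leBP U x y : (exists k, Bbound U x y k) -> forall k, B U x y <= k <-> Bbound U x y k.
Proof.
move=> /ex_minimal Hex k.
have [HB Hmin] := ClassicalEpsilon.epsilon_spec (inhabits 0) _ Hex.
by split; [apply: Bbound_mono HB | exact: Hmin].
Qed.

(** * B is upper semi-computable *)

Section Semicomputable.

Variables (U : bstr -> option bstr) (cU : code).
Hypothesis HU : forall s n, eval cU [:: encode s] n <-> exists t, U s = Some t /\ n = encode t.

(* Within [w] steps, the string coded by [j] is a description witnessing
   [Bbound U x y k], where [ex], [ey] code [x], [y]. *)
Definition stage_test w ex ey k j : bool :=
  (2 * ilog2 j.+1 < k.+2) && (oenc (run w cU [:: pairnum j ey]) == ex.+1) ||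
  (ilog2 j.+1 < k.+1) && (oenc (run w cU [:: pairnum j 0]) == ex.+1).

Definition stage ex ey k w := has (stage_test w ex ey k) (iota 0 w).

Definition RunU g1 g2 := CComp (csim cU 1) [:: g1; g2].

Lemma eval_RunU v g1 g2 w q :
  eval g1 v w -> eval g2 v q -> eval (RunU g1 g2) v (oenc (run w cU [:: q])).
Proof. by move=> h1 h2; apply: eval_comp2 h1 h2 _; exact: simulatesP. Qed.

Definition cStageTest :=
  Sg (Add (Mul (Ltb (Mul (cconst 2) (Ilog2 (Suc (CProj 0)))) (Suc (Suc (CProj 5))))
           (Eqb (RunU (CProj 2) (Pairnum (CProj 0) (CProj 4))) (Suc (CProj 3))))
      (Mul (Ltb (Ilog2 (Suc (CProj 0))) (Suc (CProj 5)))
           (Eqb (RunU (CProj 2) (Pairnum (CProj 0) (cconst 0))) (Suc (CProj 3))))).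

Lemma eval_cStageTest j r w ex ey k :
  eval cStageTest [:: j; r; w; ex; ey; k] (stage_test w ex ey k j).
Proof.
set v := [:: j; r; w; ex; ey; k].
have := eval_Sg (eval_Add
  (eval_Mul (eval_Ltb (eval_Mul (eval_cconst 2 v) (eval_Ilog2 (eval_Suc (evProj 0 v))))
                      (eval_Suc (eval_Suc (evProj 5 v))))
            (eval_Eqb (eval_RunU (evProj 2 v) (eval_Pairnum (evProj 0 v) (evProj 4 v)))
                      (eval_Suc (evProj 3 v))))
  (eval_Mul (eval_Ltb (eval_Ilog2 (eval_Suc (evProj 0 v))) (eval_Suc (evProj 5 v)))
            (eval_Eqb (eval_RunU (evProj 2 v) (eval_Pairnum (evProj 0 v) (eval_cconst 0 v)))
                      (eval_Suc (evProj 3 v))))).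
by rewrite addn_eq0 !muln_eq0 !eqb0 negb_and !negb_or !negbK.
Qed.

Definition cStage :=
  CComp (CPrec CZero (Sg (Add (CProj 1) cStageTest)))
        [:: CProj 0; CProj 0; CProj 1; CProj 2; CProj 3].

Lemma eval_cStage w ex ey k : eval cStage [:: w; ex; ey; k] (stage ex ey k w).
Proof.
apply: (@evComp _ _ _ [:: w; w; ex; ey; k]); first by repeat constructor.
apply: (eval_prec (h := fun i => has (stage_test w ex ey k) (iota 0 i) : nat)).
  by constructor.
move=> i _; rewrite (_ : iota 0 i.+1 = iota 0 i ++ [:: i]); last by rewrite -addn1 iotaD.
rewrite has_cat /= orbF; set b := has _ _.
have := eval_Sg (eval_Add (evProj 1 [:: i; b : nat; w; ex; ey; k]) (eval_cStageTest i b w ex ey k)).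
by case: b; case: (stage_test _ _ _ _ i).
Qed.

Definition cBbound := CMu (Ifz cStage (cconst 1) (cconst 0)).

Lemma eval_cBbound_body w ex ey k :
  eval (Ifz cStage (cconst 1) (cconst 0)) [:: w; ex; ey; k] (~~ stage ex ey k w).
Proof.
by have := eval_Ifz (eval_cStage w ex ey k) (eval_cconst 1 _) (eval_cconst 0 _); case: stage.
Qed.

Lemma cBbound_halts ex ey k :
  (exists n, eval cBbound [:: ex; ey; k] n) <-> exists w, stage ex ey k w.
Proof.
split.
- case=> n H; inversion H; subst; exists n.
  by have := eval_fun H1 (eval_cBbound_body n ex ey k); case: stage.
- move=> Hex; have [w Hw Hmin] := ex_minnP Hex.
  exists w; constructor; first by have := eval_cBbound_body w ex ey k; rewrite Hw.
  move=> m Hm; exists 0; have := eval_cBbound_body m ex ey k.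
  by case E: (stage _ _ _ m) => //; have := Hmin m E; rewrite leqNgt Hm.
Qed.

Lemma stageP x y k : (exists w, stage (encode x) (encode y) k w) <-> Bbound U x y k.
Proof.
have Hrun w q : run w cU [:: encode q] = Some (encode x) -> U q = Some x.
  by move/run_sound/HU => [t [-> /encode_inj ->]].
have oencE o n : (oenc o == n.+1) = (o == Some n).
  by case: o => [a|] //=; apply/eqP/eqP => [[->]|[->]].
have encode_nil : 0 = encode [::] by [].
split.
- case=> w /hasP [j _]; have [z <-] := encode_surj j.
  rewrite /stage_test !ilog2_encodeS !oencE encode_nil !pairnum_encode.
  move=> /orP[] /andP[h1 /eqP h2].
  + by left; exists z; split; [lia | exact: Hrun h2].
  + by right; exists z; split; [lia | exact: Hrun h2].
- have Hc q : U q = Some x ->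
              exists t, forall w, t <= w -> run w cU [:: encode q] = Some (encode x).
    move=> Hq; have /run_complete [t Ht] : eval cU [:: encode q] (encode x).
      by apply/HU; exists x.
    by exists t => w Hw; exact: run_mono Ht Hw.
  case=> [[z [Hz Hq]]|[z [Hz Hq]]]; have [t Ht] := Hc _ Hq;
    exists (maxn t (encode z).+1); apply/hasP; exists (encode z);
    rewrite ?mem_iota ?leq_maxr // /stage_test ilog2_encodeS !oencE encode_nil;
    rewrite !pairnum_encode Ht ?leq_maxl // eqxx andbT; apply/orP; [left | right]; lia.
Qed.

End Semicomputable.

Lemma B_upper_semicomputable U : machine U -> (forall x y, exists k, Bbound U x y k) ->
  upper_semicomputable (B U).
Proof.
move=> [cU HU] Hex; exists (cBbound cU) => x y k.
by rewrite (leBP (Hex x y)) cBbound_halts; exact: iff_sym (stageP HU x y k).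
Qed.

(** * Counting decodable values *)

Lemma size_le_decodable (T : eqType) (dec : bstr -> option T) n (s : seq T) : uniq s ->
  (forall x, x \in s -> exists w, size w <= n /\ dec w = Some x) -> size s <= 2 ^ n.+1.
Proof.
move=> s_uniq Hdec.
pose P x w := size w <= n /\ dec w = Some x.
pose code x := ClassicalEpsilon.epsilon (inhabits [::]) (P x).
have codeP x : x \in s -> P x (code x).
  by move=> /Hdec; exact: ClassicalEpsilon.epsilon_spec.
have code_inj : {in s &, injective (encode \o code)}.
  move=> x x' /codeP [_ Hx] /codeP [_ Hx'] /= /encode_inj E.
  by move: Hx; rewrite E Hx' => [[]].
rewrite -(size_map (encode \o code)) -(size_iota 0 (2 ^ n.+1)).
apply: uniq_leq_size; first by rewrite map_inj_in_uniq.
move=> _ /mapP [x /codeP [Hx _] ->]; rewrite mem_iota /=.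
exact: encode_lt.
Qed.

Definition decode_given (U : bstr -> option bstr) (y w : bstr) : option bstr :=
  if w is b :: z then U (spair z (if b then y else [::])) else None.

Definition decode_pair (U : bstr -> option bstr) (w : bstr) : option bstr :=
  if w is b :: w' then (if b then U w' else U (spair w' [::])) else None.

Lemma Bbound_transfer U x x' y k c :
  (forall z y, U (spair z y) = Some x ->
     exists z', U (spair z' y) = Some x' /\ size z' <= size z + c) ->
  Bbound U x y k -> Bbound U x' y (k + 2 * c).
Proof.
move=> Htr [[z [Hz Hx]]|[z [Hz Hx]]]; have [z' [Hx' Hz']] := Htr _ _ Hx;
  [left | right]; exists z'; split=> //; lia.
Qed.

Lemma spair_injl y : injective (spair^~ y).
Proof. by move=> a b /spair_inj []. Qed.

Lemma spair_injr z : injective (spair z).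
Proof. by move=> a b /spair_inj []. Qed.

Section Properties.

Variable U : bstr -> option bstr.
Hypotheses (U_machine : machine U) (U_optimal : optimal U).

Lemma optimal_plain : exists c, forall x,
  exists z, U (spair z [::]) = Some x /\ size z <= size x + c.
Proof.
have [c Hc] := U_optimal (pcomputable_inv_fun (@spair_injl [::]) (pcomputable_spair_l [::])).
by exists c => x; apply: (Hc x [::] x); apply/(inv_funP (@spair_injl [::])).
Qed.

Lemma optimal_self : exists c, forall x, exists z, U (spair z x) = Some x /\ size z <= c.
Proof.
have [c Hc] := U_optimal (pcomputable_inv_fun (@spair_injr [::]) (pcomputable_spair_r [::])).
by exists c => x; apply: (Hc x x [::]); apply/(inv_funP (@spair_injr [::])).
Qed.

Lemma optimal_id : exists c, forall u y,
  exists z, U (spair z y) = Some (spair u y) /\ size z <= size u + c.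
Proof.
by have [c Hc] := U_optimal pcomputable_id; exists c => u y; exact: Hc.
Qed.

Lemma Bbound_ex x y : exists k, Bbound U x y k.
Proof.
have [c Hc] := optimal_plain; have [z [Hz _]] := Hc x.
by exists (size z); right; exists z.
Qed.

Lemma B_le_size : exists c, forall x y, B U x y <= size x + c.
Proof.
have [c Hc] := optimal_plain; exists c => x y; apply/(leBP (Bbound_ex x y)).
by have [z [Hz Hsz]] := Hc x; right; exists z.
Qed.

Lemma B_count y n (s : seq bstr) : uniq s -> all (fun x => B U x y <= n) s ->
  size s <= 4 * 2 ^ n.
Proof.
move=> s_uniq /allP Hs; rewrite (_ : 4 * 2 ^ n = 2 ^ n.+2); last by rewrite !expnS mulnA.
apply: (size_le_decodable (dec := decode_given U y)) => // x /Hs /(leBP (Bbound_ex x y)).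
by case=> -[z [Hz Hx]]; [exists (true :: z) | exists (false :: z)]; split=> //=; lia.
Qed.

Lemma B_pcomputable_le f : pcomputable f ->
  exists cf, forall y x fx, f x = Some fx -> B U fx y <= B U x y + cf.
Proof.
move=> f_comp; have [c Hc] := U_optimal (pcomputable_comp U_machine f_comp).
exists (2 * c) => y x fx Hfx; apply/(leBP (Bbound_ex fx y)).
apply: Bbound_transfer (proj1 (leBP (Bbound_ex x y) _) (leqnn _)).
by move=> z y' Hz; apply: Hc; rewrite Hz.
Qed.

Lemma B_self_le : exists e, forall x, B U x x <= e.
Proof.
have [c Hc] := optimal_self; exists (2 * c) => x; apply/(leBP (Bbound_ex x x)).
by have [z [Hz Hsz]] := Hc x; left; exists z; split=> //; lia.
Qed.

Lemma isC_ex x y : (exists z, U (spair z y) = Some x) -> exists m, isC U x y m.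
Proof.
move=> [z Hz]; have [m [[z' [Hz' <-]] Hmin]] :=
  ex_minimal (ex_intro (fun m => exists z, U (spair z y) = Some x /\ size z = m) _
               (ex_intro _ z (conj Hz erefl))).
by exists (size z'); split; [exists z' | move=> z'' Hz''; apply: Hmin; exists z''].
Qed.

(* A conditional description [z] of [x] given [y] with [2 |z| <= m + K + 1]
   has [|z| <= K + 1], as [|z| >= m]. *)
Lemma decode_pair_of_B_le x y m K : isC U x y m -> B U x y <= m + K ->
  exists w, size w <= maxn (2 * K + 5 + size y) (m + K).+1 /\ decode_pair U w = Some x.
Proof.
move=> [_ Hmin] /(leBP (Bbound_ex x y)) [[z [Hz Hx]]|[z [Hz Hx]]].
- by exists (true :: spair z y); split=> //=; have := Hmin _ Hx; rewrite size_spair; lia.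
- by exists (false :: z); split=> //=; lia.
Qed.

(* With [L = 2K + 7], the [2^(2L+c)] strings [<u, y>], [|u| = L],
   [|y| = L + c], cannot all be decoded from strings of length [2K + 5 + L + c]. *)
Lemma B_C_unbounded K : exists x y m, isC U x y m /\ K < natdist (B U x y) m.
Proof.
have [c Hc] := optimal_id; set L := 2 * K + 7.
apply: Classical_Prop.NNPP => Hnot.
pose s := [seq spair (val p.1) (val p.2) | p <- enum {: L.-tuple bool * (L + c).-tuple bool}].
have s_uniq : uniq s.
  rewrite map_inj_uniq ?enum_uniq // => -[u y] [u' y'] /spair_inj /= [].
  by move=> /val_inj -> /val_inj ->.
have Hdec x : x \in s -> exists w, size w <= (2 * K + 5 + (L + c)) /\ decode_pair U w = Some x.
  move=> /mapP [[u y] _ ->] /=.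
  have [z [Hz Hsz]] := Hc u y; have [m Hm] := isC_ex (ex_intro _ z Hz).
  have le_mz := Hm.2 _ Hz; rewrite size_tuple in Hsz.
  have HB : B U (spair u y) y <= m + K.
    rewrite leqNgt; apply/negP => lt_mKB; apply: Hnot.
    by exists (spair u y), y, m; split=> //; rewrite /natdist; lia.
  have [w [Hw Hdw]] := decode_pair_of_B_le Hm HB.
  by exists w; split=> //; move: Hw; rewrite size_tuple; lia.
have := size_le_decodable s_uniq Hdec.
by rewrite size_map -cardE card_prod !card_tuple card_bool -expnD leq_exp2l //; lia.
Qed.

End Properties.

Theorem theorem6 :
  forall U : bstr -> option bstr, machine U -> optimal U ->
  exists B : bstr -> bstr -> nat,
    (* (1) *) upper_semicomputable B /\
    (* (2) *) (exists c, forall x y, B x y <= size x + c) /\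
    (* (3) *) (exists d, forall (y : bstr) (n : nat) (s : seq bstr),
                 uniq s -> all (fun x => B x y <= n) s -> size s <= d * 2 ^ n) /\
    (* (4) *) (forall f, pcomputable f -> exists cf, forall (y x fx : bstr),
                 f x = Some fx -> B fx y <= B x y + cf) /\
    (* (5) *) (exists e, forall x, B x x <= e) /\
    (* (6) *) (forall k, exists x y m, isC U x y m /\ k < natdist (B x y) m).
Proof.
move=> U U_machine U_optimal; exists (B U); split; last split; last split.
- exact: B_upper_semicomputable (Bbound_ex U_optimal).
- exact: B_le_size.
- by exists 4; exact: B_count.
- split; first exact: B_pcomputable_le.
  split; [exact: B_self_le | exact: B_C_unbounded].
Qed.
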